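(* Let $X$ be a finite set. (i) If $F$ is a set of permutations of $X$, then $\langle F\rangle_G=\mathrm{Aut}(\mathrm{Inv}(F))$. (ii) If $F$ is a set of multipermutations on $X$, then $\langle F\rangle_{DSM}=\mathrm{shE}(\mathrm{Inv}(F))$.
   Context: A multipermutation on $X$ is a map $f:X\to\mathcal{P}(X)\setminus\{\emptyset\}$ such that every $y\in X$ lies in $f(x)$ for some $x$; permutations are identified with multipermutations with singleton images. A multipermutation $f$ preserves a relation $R\subseteq X^i$ if $(x_1,\dots,x_i)\in R$ and $y_j\in f(x_j)$ for all $j$ imply $(y_1,\dots,y_i)\in R$. $\mathrm{Inv}(F)$ is the set of all relations on $X$ (of all finite arities) preserved by every member of $F$, regarded as a relational structure on $X$. For a structure $\mathcal{C}$ on $X$, $\mathrm{Aut}(\mathcal{C})$ is its set of automorphisms and $\mathrm{shE}(\mathcal{C})$ is the set of multipermutations on $X$ preserving all relations of $\mathcal{C}$. The identity multipermutation is $x\mapsto\{x\}$; the composition $g\circ f$ is $x\mapsto\{z:\exists y\,(y\in f(x)\wedge z\in g(y))\}$; $f$ is a sub-multipermutation of $g$ if $f(x)\subseteq g(x)$ for all $x$. A down-shop-monoid (DSM) on $X$ is a set of multipermutations on $X$ containing the identity and closed under composition and under taking sub-multipermutations (that are themselves multipermutations). $\langle F\rangle_{DSM}$ is the smallest DSM containing $F$, and $\langle F\rangle_G$ is the permutation group generated by $F$. *)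

From mathcomp Require Import all_boot all_fingroup.
Set Implicit Arguments. Unset Strict Implicit. Unset Printing Implicit Defensive.

(* X is modelled by a finite type T. *)
Section Defs.
Variable T : finType.

Definition relation := {n : nat & {set n.-tuple T}}.
Definition structure := relation -> Prop.

Definition mmap := T -> {set T}.
Definition is_multiperm (f : mmap) : Prop :=
  (forall x, f x != set0) /\ (forall y, exists x, y \in f x).

(* Permutations identified with singleton-image multipermutations. *)
Definition mp_of_perm (g : {perm T}) : mmap := fun x => [set g x].

Definition mp_id : mmap := fun x => [set x].
Definition mp_comp (g f : mmap) : mmap := fun x => \bigcup_(y in f x) g y.
Definition sub_mp (f g : mmap) : Prop := forall x, f x \subset g x.

Definition preserves (f : mmap) (R : relation) : Prop :=
  forall (t u : (projT1 R).-tuple T), t \in projT2 R ->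
    (forall j, tnth u j \in f (tnth t j)) -> u \in projT2 R.

Definition Inv (F : mmap -> Prop) : structure :=
  fun R => forall f, F f -> preserves f R.

Definition InvP (F : {set {perm T}}) : structure :=
  Inv (fun f => exists2 g, g \in F & f = mp_of_perm g).

Definition AutS (C : structure) (g : {perm T}) : Prop :=
  forall R, C R -> forall t : (projT1 R).-tuple T,
    (t \in projT2 R) = ([tuple of map g t] \in projT2 R).

Definition shE (C : structure) (f : mmap) : Prop :=
  is_multiperm f /\ forall R, C R -> preserves f R.

Definition is_DSM (M : mmap -> Prop) : Prop :=
  [/\ forall f, M f -> is_multiperm f,
      M mp_id,
      forall f g, M f -> M g -> M (mp_comp g f) &
      forall f g, M g -> is_multiperm f -> sub_mp f g -> M f].

Definition gen_DSM (F : mmap -> Prop) (f : mmap) : Prop :=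
  forall M, is_DSM M -> (forall h, F h -> M h) -> M f.

End Defs.

(* (i) Every permutation group G on T is the automorphism group of one relation:
   the orbit under G of a tuple enumerating T; a permutation preserving that
   orbit maps the enumeration to the enumeration moved by some member of G,
   hence belongs to G.
   (ii) Dually, a down-shop-monoid M is recovered from one relation of arity
   |T x T|: the images under members of M of the tuple whose coordinate at a
   pair (x, y) is x.  A multipermutation f preserving it sends that tuple to a
   tuple choosing y at (x, y) whenever y is in f x, so f lies below a member of
   M.  In both parts the generated structure preserves Inv(F) since the
   preserving maps form a group, resp. a down-shop-monoid. *)
From mathcomp Require Import all_boot all_fingroup.
From mathcomp Require boolp.
Set Implicit Arguments. Unset Strict Implicit. Unset Printing Implicit Defensive.

Section Permutations.
Variable T : finType.
Import GroupScope.

Definition tmap n (g : {perm T}) (t : n.-tuple T) : n.-tuple T := [tuple of map g t].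

Lemma tmap1 n (t : n.-tuple T) : tmap 1 t = t.
Proof. by apply: eq_from_tnth => j; rewrite tnth_map perm1. Qed.

Lemma tmapM n (g h : {perm T}) (t : n.-tuple T) : tmap (g * h) t = tmap h (tmap g t).
Proof. by apply: eq_from_tnth => j; rewrite !tnth_map permM. Qed.

Lemma tmapK n (g : {perm T}) (t : n.-tuple T) : tmap g^-1 (tmap g t) = t.
Proof. by rewrite -tmapM mulgV tmap1. Qed.

Lemma preserves_perm (g : {perm T}) (R : relation T) :
  preserves (mp_of_perm g) R <-> {in projT2 R, forall t, tmap g t \in projT2 R}.
Proof.
split=> [gR t tR | gR t u tR tu].
  by apply: (gR t) => // j; rewrite tnth_map inE.
suff -> : u = tmap g t by exact: gR.
by apply: eq_from_tnth => j; rewrite tnth_map; apply/set1P.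
Qed.

Definition rel_stab (R : relation T) : {set {perm T}} :=
  [set g | [forall t in projT2 R, tmap g t \in projT2 R]].

Lemma rel_stabP (R : relation T) g :
  reflect {in projT2 R, forall t, tmap g t \in projT2 R} (g \in rel_stab R).
Proof. by rewrite inE; apply: forall_inP. Qed.

Lemma group_set_rel_stab (R : relation T) : group_set (rel_stab R).
Proof.
apply/andP; split; first by apply/rel_stabP => t; rewrite tmap1.
apply/subsetP => _ /mulsgP[g h /rel_stabP gR /rel_stabP hR ->].
by apply/rel_stabP => t tR; rewrite tmapM; apply/hR/gR.
Qed.

Canonical rel_stab_group R := Group (group_set_rel_stab R).

Lemma gen_sub_rel_stab (F : {set {perm T}}) (R : relation T) :
  InvP F R -> <<F>> \subset rel_stab R.
Proof.
move=> FR; rewrite gen_subG; apply/subsetP => g gF.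
by apply/rel_stabP/preserves_perm; apply: FR; exists g.
Qed.

Lemma gen_sub_Aut (F : {set {perm T}}) (g : {perm T}) :
  g \in <<F>> -> AutS (InvP F) g.
Proof.
move=> gF R FR t; have /subsetP stabF := gen_sub_rel_stab FR.
have /rel_stabP gR := stabF g gF; have /rel_stabP g'R := stabF _ (groupVr gF).
by apply/idP/idP => [/gR // | /g'R]; rewrite tmapK.
Qed.

Definition enum_tuple : #|T|.-tuple T := [tuple enum_val i | i < #|T|].

Lemma tmap_enum_inj : injective (fun g : {perm T} => tmap g enum_tuple).
Proof.
move=> g h eq_gh; apply/permP => x.
have := congr1 (fun t => tnth t (enum_rank x)) eq_gh.
by rewrite /= !tnth_map tnth_ord_tuple enum_rankK.
Qed.

Definition orbit_rel (G : {set {perm T}}) : relation T :=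
  Tagged (fun n => {set n.-tuple T}) [set tmap g enum_tuple | g in G].

Lemma InvP_orbit_rel (F : {set {perm T}}) : InvP F (orbit_rel <<F>>).
Proof.
move=> _ [g gF ->]; apply/preserves_perm => _ /imsetP[h hF ->].
by apply/imsetP; exists (h * g); [exact: groupM hF (mem_gen gF) | rewrite tmapM].
Qed.

Lemma Aut_sub_gen (F : {set {perm T}}) (g : {perm T}) :
  AutS (InvP F) g -> g \in <<F>>.
Proof.
move=> Ag; have enumF : enum_tuple \in projT2 (orbit_rel <<F>>).
  by apply/imsetP; exists 1; rewrite ?tmap1.
have /imsetP[h hF /tmap_enum_inj ->] := etrans (esym (Ag _ (@InvP_orbit_rel F) _)) enumF.
exact: hF.
Qed.

End Permutations.

Section Multipermutations.
Variable T : finType.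
Implicit Types (f g h : mmap T) (R : relation T).

Lemma mp_id_multiperm : is_multiperm (@mp_id T).
Proof. by split=> x; [apply/set0Pn; exists x | exists x]; rewrite inE. Qed.

Lemma mp_comp_multiperm f g :
  is_multiperm f -> is_multiperm g -> is_multiperm (mp_comp g f).
Proof.
move=> [f0 fcov] [g0 gcov]; split=> [x | z].
  have [y yf] := set0Pn _ (f0 x); have [z zg] := set0Pn _ (g0 y).
  by apply/set0Pn; exists z; apply/bigcupP; exists y.
have [y zg] := gcov z; have [x yf] := fcov y.
by exists x; apply/bigcupP; exists y.
Qed.

Lemma preserves_id R : preserves (@mp_id T) R.
Proof.
move=> t u tR tu; suff -> : u = t by [].
by apply: eq_from_tnth => j; apply/set1P.
Qed.

Lemma preserves_comp f g R :
  preserves f R -> preserves g R -> preserves (mp_comp g f) R.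
Proof.
move=> fR gR t u tR tu.
pose mid j := [pick y | (y \in f (tnth t j)) && (tnth u j \in g y)].
pose v := [tuple odflt (tnth t j) (mid j) | j < projT1 R].
have vP j : (tnth v j \in f (tnth t j)) && (tnth u j \in g (tnth v j)).
  rewrite tnth_mktuple /mid; case: pickP => //= none.
  by have /bigcupP[y yf ug] := tu j; have := none y; rewrite yf ug.
by apply: (gR v) => [|j]; [apply: (fR t) => // j|]; case/andP: (vP j).
Qed.

Lemma preserves_sub f g R : sub_mp f g -> preserves g R -> preserves f R.
Proof. by move=> fg gR t u tR tu; apply: (gR t) => // j; apply/(subsetP (fg _)). Qed.

Lemma shE_DSM (C : structure T) : is_DSM (shE C).
Proof.
split=> [f [] // | | f g [fm fC] [gm gC] | f g [gm gC] fm fg].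
- by split=> [|R _]; [exact: mp_id_multiperm | exact: preserves_id].
- by split=> [|R CR]; [exact: mp_comp_multiperm | apply: preserves_comp; auto].
- by split=> // R CR; apply: preserves_sub fg (gC R CR).
Qed.

Lemma gen_DSM_sub_shE (F : mmap T -> Prop) f :
  (forall g, F g -> is_multiperm g) -> gen_DSM F f -> shE (Inv F) f.
Proof. by move=> Fm; apply; [exact: shE_DSM | split; auto]. Qed.

Definition pair_tuple : #|{: T * T}|.-tuple T :=
  [tuple (enum_val i).1 | i < #|{: T * T}|].

Definition image_rel (M : mmap T -> Prop) : relation T :=
  Tagged (fun n => {set n.-tuple T})
    [set u | boolp.asbool (exists2 h, M h & forall j, tnth u j \in h (tnth pair_tuple j))].

Lemma image_relP (M : mmap T -> Prop) u :
  reflect (exists2 h, M h & forall j, tnth u j \in h (tnth pair_tuple j))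
          (u \in projT2 (image_rel M)).
Proof. by rewrite inE; apply: boolp.asboolP. Qed.

Lemma Inv_image_rel (F M : mmap T -> Prop) : is_DSM M -> (forall g, F g -> M g) ->
  Inv F (image_rel M).
Proof.
move=> [_ _ Mcomp _] FM g Fg t u /image_relP[h Mh th] tu; apply/image_relP.
exists (mp_comp g h) => [|j]; first exact: Mcomp Mh (FM _ Fg).
by apply/bigcupP; exists (tnth t j).
Qed.

Lemma preserves_image_rel (M : mmap T -> Prop) f : is_DSM M ->
  is_multiperm f -> preserves f (image_rel M) -> M f.
Proof.
move=> [_ Mid _ Msub] fm fM.
pose choice (p : T * T) := if p.2 \in f p.1 then p.2 else odflt p.1 [pick y in f p.1].
have choiceP p : choice p \in f p.1.
  rewrite /choice; case: ifP => // _; case: pickP => //= none.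
  by have [y yf] := set0Pn _ (fm.1 p.1); have := none y; rewrite yf.
have /image_relP[h Mh fh] : [tuple choice (enum_val i) | i < #|{: T * T}|]
    \in projT2 (image_rel M).
  apply: (fM pair_tuple) => [|j]; last by rewrite !tnth_mktuple.
  by apply/image_relP; exists (@mp_id T) => // j; apply/set1P.
apply: Msub Mh fm _ => x; apply/subsetP => y yf.
by have := fh (enum_rank (x, y)); rewrite !tnth_mktuple enum_rankK /choice /= yf.
Qed.

Lemma shE_sub_gen_DSM (F : mmap T -> Prop) f : shE (Inv F) f -> gen_DSM F f.
Proof.
move=> [fm fF] M DSM_M FM.
exact: preserves_image_rel DSM_M fm (fF _ (Inv_image_rel DSM_M FM)).
Qed.

End Multipermutations.

Theorem theorem2p5 (T : finType) :
  (forall (F : {set {perm T}}) (g : {perm T}),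
      g \in <<F>>%g <-> AutS (InvP F) g) /\
  (forall F : mmap T -> Prop, (forall f, F f -> is_multiperm f) ->
      forall f : mmap T, gen_DSM F f <-> shE (Inv F) f).
Proof.
split=> [F g | F Fm f].
  by split; [exact: gen_sub_Aut | exact: Aut_sub_gen].
by split; [exact: gen_DSM_sub_shE | exact: shE_sub_gen_DSM].
Qed.
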